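(* For $n\ge 0$ let $K_n$ be the complete graph on $n$ vertices ($K_0$ empty). Then $$\sum_{n\ge 0}\mathrm{sa}(K_n;t)\,\frac{x^n}{n!} = e^{tx}\,\operatorname{sech} x.$$
   Context: All graphs are finite, simple and undirected. For a graph $G=(V,E)$ and $V'\subseteq V$, $G|_{V'}$ denotes the induced subgraph on $V'$. The signed a-number $\mathrm{sa}(G)$ is defined recursively: $\mathrm{sa}(G)=1$ if $G$ is the empty graph (no vertices); $\mathrm{sa}(G)=0$ if $G$ has a connected component with an odd number of vertices; otherwise $\mathrm{sa}(G)=-\sum_{V'\subsetneq V}\mathrm{sa}(G|_{V'})$. The signed a-polynomial of $G$ is $\mathrm{sa}(G;t)=\sum_{V'\subseteq V}\mathrm{sa}(G|_{V'})\,t^{|V\setminus V'|}$. *)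

From HB Require Import structures.
From mathcomp Require Import all_boot all_order all_algebra.
From mathcomp Require Import all_classical all_reals all_analysis.
Set Implicit Arguments. Unset Strict Implicit. Unset Printing Implicit Defensive.
Import Order.TTheory GRing.Theory Num.Theory.
Local Open Scope ring_scope.

(* A finite simple graph is given by a vertex set V : {set T} inside a finType T
   and an adjacency relation e : rel T (assumed symmetric and irreflexive where
   needed).  The induced subgraph G|_{V'} is (V', e) for V' \subset V. *)

Definition restr_rel (T : finType) (e : rel T) (V : {set T}) : rel T :=
  [rel x y | [&& x \in V, y \in V & e x y]].

Definition component (T : finType) (e : rel T) (V : {set T}) (x : T) : {set T} :=
  [set y in V | connect (restr_rel e V) x y].

Definition has_odd_component (T : finType) (e : rel T) (V : {set T}) : bool :=
  [exists x in V, odd #|component e V x|].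

(* signed a-number, by recursion with fuel (fuel = #|V| suffices, since proper
   subsets have strictly smaller cardinality) *)
Fixpoint sa_rec (T : finType) (e : rel T) (k : nat) (V : {set T}) : int :=
  match k with
  | 0 => 1
  | k'.+1 =>
      if V == finset.set0 then 1
      else if has_odd_component e V then 0
      else - \sum_(W : {set T} | W \proper V) sa_rec e k' W
  end.

Definition sa (T : finType) (e : rel T) (V : {set T}) : int := sa_rec e #|V| V.

Definition sa_poly_eval (R : comNzRingType) (T : finType) (e : rel T) (V : {set T}) (t : R) : R :=
  \sum_(W : {set T} | W \subset V) (sa e W)%:~R * t ^+ #|V :\: W|.

Definition Kn_rel (n : nat) : rel 'I_n := fun i j => i != j.
Arguments Kn_rel : clear implicits.

Definition sech (R : realType) (x : R) : R := 2 / (expR x + expR (- x)).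

From mathcomp Require Import all_boot all_order all_algebra.
From mathcomp Require Import all_classical all_reals all_analysis.
From mathcomp Require Import ring.
Import Order.TTheory GRing.Theory Num.Theory.
Import numFieldNormedType.Exports.
Set Implicit Arguments. Unset Strict Implicit. Unset Printing Implicit Defensive.
Local Open Scope classical_set_scope.
Local Open Scope ring_scope.

(* In a complete graph every nonempty vertex set is connected, so [sa] of the
   subgraph on W depends only on m = #|W|: these numbers a_m vanish for odd m
   and satisfy sum_j C(m, j) a_j = 0 for even m > 0, i.e. (sum_m a_m x^m/m!) cosh x = 1,
   so a_m is the m-th Euler number, the Taylor coefficient of sech. We get the
   recurrence algebraically: the derivatives of sech and cosh are polynomials in
   tanh times sech resp. cosh, and the Leibniz rule for sech * cosh = 1 becomes a
   polynomial identity whose value at 0 is the recurrence. The same polynomials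
   for sec and tan have nonnegative coefficients dominating those for sech, and
   Taylor's inequality bounds sum_m |a_m| y^m/m! by sec y for 0 <= y < pi/2, so
   the series converges absolutely for |x| < pi/2. Finally sa(K_n; t) is the
   binomial convolution of the a_k with the powers of t, so the generating
   series is the Cauchy product of sech x with exp(t x). *)

Lemma sum_binomial_pascal (V : zmodType) (h : nat -> nat -> V) n :
  \sum_(j < n.+2) h (n.+1 - j)%N j *+ 'C(n.+1, j) =
  \sum_(j < n.+1) (h (n.+1 - j)%N j + h (n - j)%N j.+1) *+ 'C(n, j).
Proof.
under [RHS]eq_bigr do rewrite mulrnDl.
rewrite big_ord_recl /= big_split /= [in RHS]big_ord_recl /= subn0 bin0 !mulr1n.
rewrite -!addrA; congr (_ + _); first by rewrite bin0.
under eq_bigr do rewrite /bump /= add1n subSS binS mulrnDr.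
rewrite big_split /=; congr (_ + _).
rewrite big_ord_recr /= (@bin_small n n.+1) // mulr0n addr0.
by apply: eq_bigr => i _; rewrite /bump /= add1n subSS.
Qed.

Section TanhPolynomials.
Variable R : comNzRingType.

(* If [g = f o tan * sec] then [g' = sec_step 1 f o tan * sec]; likewise
   [sec_step (-1)] differentiates [f o tanh * sech]. *)
Definition sec_step (e : R) (f : {poly R}) : {poly R} :=
  (1 + e *: 'X^2) * f^`() + e *: ('X * f).

Definition sec_poly n : {poly R} := iter n (sec_step 1) 1.
Definition sech_poly n : {poly R} := iter n (sec_step (-1)) 1.

(* The derivative [d/dx] on functions of [tanh x], and [cosh^(m) = cosh_poly m o tanh * cosh]. *)
Definition tanh_deriv (f : {poly R}) : {poly R} := (1 - 'X^2) * f^`().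
Definition cosh_poly m : {poly R} := if odd m then 'X else 1.

(* Leibniz expansion of the [n]-th derivative of [sech * cosh = 1]. *)
Definition sech_cosh_poly n : {poly R} :=
  \sum_(j < n.+1) (cosh_poly (n - j) * sech_poly j) *+ 'C(n, j).

(* The Taylor coefficients of [sech] at [0], i.e. the Euler numbers. *)
Definition euler n : R := (sech_poly n).[0].

Lemma coef_sec_step e f k :
  (sec_step e f)`_k = f`_k.+1 *+ k.+1 + e * (f`_k.-1 *+ k).
Proof.
rewrite /sec_step mulrDl mul1r -scalerAl !coefD !coefZ coef_deriv coefXM coefXnM.
case: k => [|[|k]] /=; rewrite ?mulr0 ?addr0 ?mulr1n //.
by rewrite !coef_deriv subn2 /= -addrA -mulrDr (mulrSr _ k.+1).
Qed.

Lemma sech_polyS n : sech_poly n.+1 = tanh_deriv (sech_poly n) - 'X * sech_poly n.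
Proof. by rewrite /sech_poly iterS /sec_step /tanh_deriv !scaleN1r. Qed.

Lemma tanh_derivM f g : tanh_deriv (f * g) = tanh_deriv f * g + f * tanh_deriv g.
Proof. rewrite /tanh_deriv derivM; ring. Qed.

Lemma tanh_deriv_cosh_poly m :
  tanh_deriv (cosh_poly m) = cosh_poly m.+1 - 'X * cosh_poly m.
Proof.
rewrite /tanh_deriv /cosh_poly /=; case: (odd m) => /=.
  by rewrite derivX mulr1; ring.
by rewrite derivC mulr0 mulr1 subrr.
Qed.

Lemma tanh_deriv_sum I (r : seq I) (P : pred I) (F : I -> {poly R}) :
  tanh_deriv (\sum_(i <- r | P i) F i) = \sum_(i <- r | P i) tanh_deriv (F i).
Proof. by rewrite /tanh_deriv raddf_sum mulr_sumr. Qed.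

Lemma tanh_derivMn f k : tanh_deriv (f *+ k) = tanh_deriv f *+ k.
Proof. by rewrite /tanh_deriv raddfMn mulrnAr. Qed.

Lemma tanh_deriv_cosh_sech m j : tanh_deriv (cosh_poly m * sech_poly j) =
  cosh_poly m.+1 * sech_poly j + cosh_poly m * sech_poly j.+1.
Proof. rewrite tanh_derivM tanh_deriv_cosh_poly sech_polyS; ring. Qed.

Lemma sech_cosh_polyS n : sech_cosh_poly n.+1 = tanh_deriv (sech_cosh_poly n).
Proof.
rewrite /sech_cosh_poly (sum_binomial_pascal (fun a b => cosh_poly a * sech_poly b)).
rewrite tanh_deriv_sum; apply: eq_bigr => j _.
by rewrite tanh_derivMn tanh_deriv_cosh_sech subSn // -ltnS.
Qed.

Lemma sech_cosh_polyS_eq0 n : sech_cosh_poly n.+1 = 0.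
Proof.
elim: n => [|n IH]; rewrite sech_cosh_polyS ?IH /tanh_deriv ?deriv0 ?mulr0 //.
by rewrite /sech_cosh_poly big_ord1 /= mulr1 mulr1n derivC mulr0.
Qed.

Lemma euler0 : euler 0 = 1.
Proof. by rewrite /euler hornerC. Qed.

(* [sech * cosh = 1], coefficientwise. *)
Lemma euler_cosh_conv n : (0 < n)%N ->
  \sum_(j < n.+1) (if odd (n - j) then 0 else euler j) *+ 'C(n, j) = 0.
Proof.
case: n => // n _; rewrite -[RHS](horner0 0) -(sech_cosh_polyS_eq0 n).
rewrite /sech_cosh_poly horner_sum; apply: eq_bigr => j _.
rewrite hornerMn hornerM /cosh_poly /euler.
by case: odd; rewrite ?hornerX ?mul0r // hornerC mul1r.
Qed.

Lemma euler_odd n : odd n -> euler n = 0.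
Proof.
elim/ltn_ind: n => n IH on.
have n_gt0 : (0 < n)%N by case: n on {IH}.
have := euler_cosh_conv n_gt0; rewrite big_ord_recr /= subnn /= binn mulr1n.
rewrite big1 ?add0r // => j _; case: ifP => [_|]; first by rewrite mul0rn.
by rewrite oddB ?on ?(ltnW (ltn_ord j)) // => /negbFE oj; rewrite IH // mul0rn.
Qed.

Lemma euler_binomial_sum n : (0 < n)%N -> ~~ odd n ->
  \sum_(j < n.+1) euler j *+ 'C(n, j) = 0.
Proof.
move=> n0 en; rewrite -[RHS](euler_cosh_conv n0); apply: eq_bigr => j _.
case: ifP => // oj; rewrite euler_odd //.
by move: oj; rewrite oddB ?(negbTE en) // -ltnS.
Qed.

End TanhPolynomials.

Section SecPolynomialBounds.
Variable R : numDomainType.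

Lemma norm_coef_sech_poly n k : `|(sech_poly R n)`_k| <= (sec_poly R n)`_k.
Proof.
elim: n k => [|n IH] k.
  by rewrite coef1; case: (k == 0%N); rewrite ?normr1 ?normr0.
rewrite /sech_poly /sec_poly !iterS !coef_sec_step mulN1r mul1r.
apply: le_trans (ler_normB _ _) _; rewrite !normrMn.
by apply: lerD; apply: ler_wMn2r.
Qed.

Lemma coef_sec_poly_ge0 n k : 0 <= (sec_poly R n)`_k.
Proof. exact: le_trans (normr_ge0 _) (norm_coef_sech_poly n k). Qed.

Lemma norm_euler n : `|euler R n| <= (sec_poly R n).[0].
Proof. by rewrite /euler !horner_coef0 norm_coef_sech_poly. Qed.

Lemma horner_sec_poly_ge0 n (y : R) : 0 <= y -> 0 <= (sec_poly R n).[y].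
Proof.
move=> y0; rewrite horner_coef; apply: sumr_ge0 => i _.
by rewrite mulr_ge0 ?exprn_ge0 ?coef_sec_poly_ge0.
Qed.

End SecPolynomialBounds.

Section SignedANumber.
Variables (T : finType) (e : rel T).
Implicit Types W : {set T}.

Lemma sa_rec_fuel k W : (#|W| <= k)%N -> sa_rec e k W = sa e W.
Proof.
have fuelS m (U : {set T}) : (#|U| <= m)%N -> sa_rec e m.+1 U = sa_rec e m U.
  elim: m U => [|m IH] U hU.
    by move: hU; rewrite leqn0 cards_eq0 => /eqP ->; rewrite /= eqxx.
  rewrite /=; case: ifP => // _; case: ifP => // _.
  congr (- _); apply: eq_bigr => U' ltU'U.
  by apply: IH; rewrite -ltnS (leq_trans (proper_card ltU'U)).
elim: k => [|k IH] hW; first by move: hW; rewrite leqn0 /sa => /eqP ->.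
move: hW; rewrite leq_eqVlt => /orP[/eqP <-|ltWk] //.
by rewrite fuelS // -IH.
Qed.

Lemma saE W : sa e W = if W == finset.set0 then 1
  else if has_odd_component e W then 0
  else - \sum_(W' : {set T} | W' \proper W) sa e W'.
Proof.
have [->|W0] := eqVneq W finset.set0; first by rewrite /sa cards0.
have cardW_gt0 : (0 < #|W|)%N by rewrite card_gt0.
rewrite /sa -(prednK cardW_gt0) /= (negbTE W0); case: ifP => // _.
congr (- _); apply: eq_bigr => W' ltW'W; apply: sa_rec_fuel.
by rewrite -ltnS (prednK cardW_gt0) proper_card.
Qed.

End SignedANumber.

Lemma sum_subset_card (T : finType) (V : nmodType) (f : nat -> V) (W : {set T}) :
  \sum_(W' : {set T} | W' \subset W) f #|W'| =
  \sum_(k < #|W|.+1) f k *+ 'C(#|W|, k).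
Proof.
rewrite (partition_big (fun W' : {set T} => inord #|W'| : 'I_(#|W|.+1)) xpredT) //.
apply: eq_bigr => k _; rewrite -cards_draws -sumr_const.
have cardW'_lt (W' : {set T}) : W' \subset W -> (#|W'| < #|W|.+1)%N.
  by rewrite ltnS; apply: subset_leq_card.
apply: eq_big => [W'|W' /andP[sW'W /eqP <-]]; last by rewrite inordK ?cardW'_lt.
rewrite !inE; apply: andb_id2l => sW'W.
by rewrite -(inj_eq val_inj) /= inordK ?cardW'_lt.
Qed.

Section CompleteGraph.
Variable n : nat.
Implicit Types W : {set 'I_n}.

Lemma component_Kn W x : x \in W -> component (Kn_rel n) W x = W.
Proof.
move=> xW; apply/setP => y; rewrite inE; case yW: (y \in W) => //=.
have [->|neq_xy] := eqVneq x y; first exact: connect0.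
by apply: connect1; rewrite /restr_rel /= xW yW.
Qed.

Lemma has_odd_component_Kn W : W != finset.set0 ->
  has_odd_component (Kn_rel n) W = odd #|W|.
Proof.
move=> /set0Pn [x xW]; apply/existsP/idP => [[y /andP[yW]]|oddW].
  by rewrite component_Kn.
by exists x; rewrite xW component_Kn.
Qed.

Lemma sa_Kn (R : comNzRingType) W : (sa (Kn_rel n) W)%:~R = euler R #|W|.
Proof.
have [m] := ubnP #|W|; elim: m W => // m IH W ltWm.
rewrite saE; have [->|W0] := eqVneq W finset.set0; first by rewrite cards0 euler0.
have cardW_gt0 : (0 < #|W|)%N by rewrite card_gt0.
rewrite has_odd_component_Kn //; case: ifP => [oddW|evenW]; first by rewrite euler_odd.
rewrite rmorphN rmorph_sum /=.
under eq_bigr => W' ltW'W do rewrite (IH W' (leq_trans (proper_card ltW'W) ltWm)).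
have := euler_binomial_sum R cardW_gt0 (negbT evenW).
rewrite -sum_subset_card (bigD1 W) //= => /eqP; rewrite addr_eq0 => /eqP ->.
by congr (- _); apply: eq_bigl => W'; rewrite finset.properEneq andbC.
Qed.

Lemma sa_poly_Kn (R : comNzRingType) (t : R) :
  sa_poly_eval (Kn_rel n) finset.setT t =
  \sum_(k < n.+1) (euler R k * t ^+ (n - k)) *+ 'C(n, k).
Proof.
have cardC W : #|~: W| = (n - #|W|)%N by rewrite cardsCs finset.setCK card_ord.
rewrite /sa_poly_eval; under eq_bigr => W _ do rewrite sa_Kn finset.setTD cardC.
by rewrite (sum_subset_card (fun k => euler R k * t ^+ (n - k))) cardsT card_ord.
Qed.

End CompleteGraph.

Section Factorials.
Variable R : numFieldType.

Lemma natr_fact_neq0 k : (k`!%:R : R) != 0.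
Proof. by rewrite pnatr_eq0 -lt0n fact_gt0. Qed.

Lemma mul_div_fact_binomial n k (y z : R) : (k <= n)%N ->
  y / k`!%:R * (z / (n - k)`!%:R) = y * z / n`!%:R *+ 'C(n, k).
Proof.
move=> le_kn; rewrite -(bin_fact le_kn) -mulr_natr !natrM.
have bin_neq0 : ('C(n, k)%:R : R) != 0 by rewrite pnatr_eq0 -lt0n bin_gt0.
by field; rewrite !natr_fact_neq0 bin_neq0.
Qed.

End Factorials.

Section TaylorInequality.
Variable R : realType.

Definition taylor_poly (F : nat -> R -> R) N : {poly R} :=
  \poly_(k < N) (F k 0 / k`!%:R).

Lemma taylor_poly_deriv F N :
  (taylor_poly F N.+1)^`() = taylor_poly (fun k => F k.+1) N.
Proof.
apply/polyP => k; rewrite coef_deriv !coef_poly ltnS.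
case: ltnP => _ //=; last by rewrite mul0rn.
rewrite factS natrM invfM -mulr_natr; field.
by rewrite natr_fact_neq0 addrC natr1 pnatr_eq0.
Qed.

Lemma horner_taylor_poly F N y :
  (taylor_poly F N).[y] = \sum_(k < N) F k 0 * y ^+ k / k`!%:R.
Proof. by rewrite horner_poly; apply: eq_bigr => k _; rewrite mulrAC. Qed.

Lemma taylor_sum_le (b : R) (F : nat -> R -> R) :
  (forall k x, 0 <= x < b -> is_derive x 1 (F k) (F k.+1 x)) ->
  (forall k x, 0 <= x < b -> 0 <= F k x) ->
  forall N y, 0 <= y < b -> \sum_(k < N) F k 0 * y ^+ k / k`!%:R <= F 0 y.
Proof.
move=> dF F_ge0 N; elim: N F dF F_ge0 => [|N IH] F dF F_ge0 y /andP[y_ge0 ltyb].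
  by rewrite big_ord0 F_ge0 // y_ge0.
rewrite -horner_taylor_poly -subr_ge0.
pose D := F 0 - horner (taylor_poly F N.+1).
pose D' := F 1 - horner (taylor_poly (fun k => F k.+1) N).
have dD z : 0 <= z < b -> is_derive z 1 D (D' z).
  by move=> hz; rewrite /D' -taylor_poly_deriv; apply: is_deriveB; apply: dF.
have D0 : D 0 = 0.
  change (F 0 0 - (taylor_poly F N.+1).[0] = 0).
  rewrite horner_taylor_poly big_ord_recl big1 ?addr0.
    by rewrite expr0 mulr1 fact0 divr1 subrr.
  by move=> i _; rewrite expr0n /= mulr0 mul0r.
have [c] : exists2 c, c \in `[0, y]%R & D y - D 0 = D' c * (y - 0).
  have in_dom z : z \in `]0, y[%R -> 0 <= z < b.
    by rewrite in_itv /= => /andP[z_gt0 ltzy]; rewrite ltW // (lt_trans ltzy).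
  apply: MVT_segment => // [z /in_dom /dD []//|].
  apply: derivable_within_continuous => z; rewrite in_itv /= => /andP[z_ge0 lezy].
  by have [] := dD z; rewrite ?z_ge0 ?(le_lt_trans lezy ltyb).
rewrite in_itv /= D0 !subr0 => /andP[c_ge0 lecy] Dy.
have -> : F 0 y - (taylor_poly F N.+1).[y] = D' c * y by exact: Dy.
rewrite mulr_ge0 // subr_ge0 horner_taylor_poly.
apply: (IH (fun k => F k.+1) (fun k => dF k.+1) (fun k => F_ge0 k.+1)).
by rewrite c_ge0 (le_lt_trans lecy ltyb).
Qed.

End TaylorInequality.

Section SecantDerivatives.
Variable R : realType.

Definition sec_deriv n : R -> R :=
  (horner (sec_poly R n) \o tan) * (fun y => (cos y)^-1).

Lemma sec_derivE n y : sec_deriv n y = (sec_poly R n).[tan y] / cos y.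
Proof. by []. Qed.

Lemma is_derive_sec_deriv n y : cos y != 0 ->
  is_derive y 1 (sec_deriv n) (sec_deriv n.+1 y).
Proof.
move=> cos_neq0.
have dP : is_derive y 1 (horner (sec_poly R n) \o tan)
    ((sec_poly R n)^`().[tan y] * (cos y)^-2) by apply: is_derive1_comp.
have dsec : is_derive y 1 (fun z => (cos z)^-1) (- (cos y) ^- 2 *: (- sin y)).
  exact: is_deriveV.
apply: is_derive_eq (is_deriveM dP dsec) _.
rewrite sec_derivE /sec_poly iterS -/(sec_poly R n) /sec_step !scale1r !hornerE.
rewrite -cos2_tan2 // /tan /= /GRing.scale /=; field.
by rewrite cos_neq0.
Qed.

Lemma cos_gt0_halfpi (y : R) : 0 <= y < pi / 2 -> 0 < cos y.
Proof.
move=> /andP[y_ge0 ltypi]; apply: cos_gt0_pihalf; rewrite ltypi andbT.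
by apply: lt_le_trans y_ge0; rewrite oppr_lt0 divr_gt0 // pi_gt0.
Qed.

Lemma sec_deriv_ge0 n (y : R) : 0 <= y < pi / 2 -> 0 <= sec_deriv n y.
Proof.
move=> hy; have cos_ge0 := ltW (cos_gt0_halfpi hy); case/andP: hy => y_ge0 ltypi.
rewrite sec_derivE divr_ge0 ?horner_sec_poly_ge0 // /tan divr_ge0 //.
apply: sin_ge0_pi; rewrite y_ge0 /=; apply: le_trans (ltW ltypi) _.
by rewrite ler_pdivrMr // ler_peMr ?pi_ge0 // ler1n.
Qed.

Lemma sum_norm_euler_le_sec N (y : R) : 0 <= y < pi / 2 ->
  \sum_(k < N) `|euler R k| * y ^+ k / k`!%:R <= (cos y)^-1.
Proof.
move=> hy; apply: le_trans (_ : \sum_(k < N) sec_deriv k 0 * y ^+ k / k`!%:R <= _).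
  apply: ler_sum => k _; rewrite sec_derivE tan0 cos0 divr1.
  rewrite ler_pM2r ?invr_gt0 ?ltr0n ?fact_gt0 // ler_wpM2r ?exprn_ge0 ?norm_euler //.
  by case/andP: hy.
have -> : (cos y)^-1 = sec_deriv 0 y by rewrite sec_derivE /= hornerC div1r.
apply: (taylor_sum_le (b := pi / 2)) => // k z hz; last exact: sec_deriv_ge0.
by apply: is_derive_sec_deriv; rewrite gt_eqF // cos_gt0_halfpi.
Qed.

End SecantDerivatives.

Lemma seriesE (V : zmodType) (u : V ^nat) N : series u N = \sum_(k < N) u k.
Proof. by rewrite seriesEord. Qed.

Section CauchyProduct.
Variable R : realType.
Implicit Types u v : R ^nat.

Definition cauchy_prod u v n : R := \sum_(k < n.+1) u k * v (n - k)%N.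

Lemma series_cauchy_prod u v N :
  series (cauchy_prod u v) N = \sum_(k < N) u k * series v (N - k)%N.
Proof.
elim: N => [|N IH]; first by rewrite !seriesE !big_ord0.
rewrite seriesSr IH big_ord_recr /= subSnn [cauchy_prod u v N]big_ord_recr /=.
rewrite subnn (_ : series v 1 = v 0%N) ?seriesE ?big_ord1 // addrA; congr (_ + _).
rewrite -big_split /=; apply: eq_bigr => k _.
by rewrite -mulrDr subSn ?(ltnW (ltn_ord k)) // seriesSr.
Qed.

Lemma series_nondecreasing u : (forall n, 0 <= u n) -> nondecreasing_seq (series u).
Proof. by move=> u_ge0; apply: (@nondecreasing_series _ u xpredT 0) => n _ _. Qed.

Lemma series_le_lim u (U : R) : (forall n, 0 <= u n) -> series u @ \oo --> U ->
  forall n, series u n <= U.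
Proof.
move=> u_ge0 cvgU n; rewrite -(cvg_lim _ cvgU) //.
by apply: nondecreasing_cvgn_le; [exact: series_nondecreasing|apply/cvg_ex; exists U].
Qed.

Lemma is_cvg_series_ge0_bounded u (M : R) : (forall n, 0 <= u n) ->
  (forall N, series u N <= M) -> cvgn (series u).
Proof.
move=> u_ge0 leM; apply: nondecreasing_is_cvgn; first exact: series_nondecreasing.
by exists M => _ [n _ <-].
Qed.

(* The partial sums of the product series are squeezed between [series u N * series v N]
   at indices [N] and [2N]. *)
Lemma cvg_cauchy_prod_ge0 u v (U V : R) : (forall n, 0 <= u n) -> (forall n, 0 <= v n) ->
  series u @ \oo --> U -> series v @ \oo --> V ->
  series (cauchy_prod u v) @ \oo --> U * V.
Proof.
move=> u_ge0 v_ge0 cvgU cvgV.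
have series_ge0 (w : R ^nat) N : (forall n, 0 <= w n) -> 0 <= series w N.
  by move=> w_ge0; rewrite seriesE sumr_ge0.
have ndv := series_nondecreasing v_ge0.
have le_prod N : series (cauchy_prod u v) N <= series u N * series v N.
  rewrite series_cauchy_prod seriesE mulr_suml; apply: ler_sum => k _.
  by rewrite ler_wpM2l // ndv // leq_subr.
have ge_prod N : series u N * series v N <= series (cauchy_prod u v) (N + N)%N.
  rewrite series_cauchy_prod big_split_ord /= seriesE mulr_suml.
  rewrite -[leLHS]addr0; apply: lerD; last first.
    by apply: sumr_ge0 => k _; rewrite mulr_ge0 ?series_ge0.
  apply: ler_sum => k _; rewrite ler_wpM2l // ndv //.
  by rewrite leq_subRL ?leq_add2r // (leq_trans (ltnW (ltn_ord k))) // leq_addl.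
have le_UV N : series (cauchy_prod u v) N <= U * V.
  by apply: le_trans (le_prod N) _; rewrite ler_pM ?series_ge0 ?series_le_lim.
have prod_ge0 n : 0 <= cauchy_prod u v n by apply: sumr_ge0 => k _; rewrite mulr_ge0.
have ndW := series_nondecreasing prod_ge0.
have cvgW := is_cvg_series_ge0_bounded prod_ge0 le_UV.
suff -> : U * V = limn (series (cauchy_prod u v)) by [].
apply/eqP; rewrite eq_le; apply/andP; split; last by apply: limr_le => //; near=> N; apply: le_UV.
have cvgUV : (fun N => series u N * series v N) @ \oo --> U * V by apply: cvgM.
rewrite -(cvg_lim _ cvgUV) //; apply: limr_le; first by apply/cvg_ex; exists (U * V).
near=> N; apply: le_trans (ge_prod N) _.
exact: nondecreasing_cvgn_le.
Unshelve. all: by end_near.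
Qed.

(* Mertens: split [u = |u| - (|u| - u)] into nonnegative parts. *)
Lemma cvg_cauchy_prod u v (U V : R) : series u @ \oo --> U -> series v @ \oo --> V ->
  cvgn [normed series u] -> cvgn [normed series v] ->
  series (cauchy_prod u v) @ \oo --> U * V.
Proof.
move=> cvgU cvgV cvg_nu cvg_nv.
set A := limn [normed series u]; set B := limn [normed series v].
pose u' n := `|u n| - u n; pose v' n := `|v n| - v n.
have series_u' : series u' @ \oo --> A - U.
  have -> : series u' = [normed series u] - series u.
    by apply/funext => N; rewrite !fctE /= !seriesE -sumrB.
  exact: cvgB.
have series_v' : series v' @ \oo --> B - V.
  have -> : series v' = [normed series v] - series v.
    by apply/funext => N; rewrite !fctE /= !seriesE -sumrB.
  exact: cvgB.
have u'_ge0 n : 0 <= u' n by rewrite subr_ge0 ler_norm.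
have v'_ge0 n : 0 <= v' n by rewrite subr_ge0 ler_norm.
have nu_ge0 n : 0 <= `|u n| by [].
have nv_ge0 n : 0 <= `|v n| by [].
have -> : series (cauchy_prod u v) =
    series (cauchy_prod (fun n => `|u n|) (fun n => `|v n|))
    - series (cauchy_prod (fun n => `|u n|) v') - series (cauchy_prod u' (fun n => `|v n|))
    + series (cauchy_prod u' v').
  apply/funext => N; rewrite !fctE !seriesE -!sumrB -big_split /=.
  apply: eq_bigr => n _; rewrite /cauchy_prod -!sumrB -big_split /=.
  by apply: eq_bigr => k _; rewrite /u' /v'; ring.
rewrite (_ : U * V = A * B - A * (B - V) - (A - U) * B + (A - U) * (B - V)); last by ring.
by apply: cvgD; [apply: cvgB; [apply: cvgB|]|]; apply: cvg_cauchy_prod_ge0.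
Qed.

End CauchyProduct.

Section SechSeries.
Variable R : realType.
Implicit Types x : R.

Definition euler_coeff x k : R := euler R k * x ^+ k / k`!%:R.
Definition cosh_coeff x k : R := 2^-1 * (exp_coeff x k + exp_coeff (- x) k).

Lemma is_cvg_normed_euler_series x : `|x| < pi / 2 ->
  cvgn [normed series (euler_coeff x)].
Proof.
move=> ltxpi; apply: (@is_cvg_series_ge0_bounded _ _ (cos `|x|)^-1) => [n|N]; first exact: normr_ge0.
rewrite seriesE (eq_bigr (fun k : 'I_N => `|euler R k| * `|x| ^+ k / k`!%:R)).
  by rewrite sum_norm_euler_le_sec // normr_ge0 ltxpi.
by move=> k _ /=; rewrite /euler_coeff !normrM normfV normrX [`|_%:R|]@ger0_norm.
Qed.

Lemma cvg_cosh_series x : series (cosh_coeff x) @ \oo --> 2^-1 * (expR x + expR (- x)).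
Proof.
have -> : series (cosh_coeff x) =
    (fun N => 2^-1 * (series (exp_coeff x) N + series (exp_coeff (- x)) N)).
  by apply/funext => N; rewrite !seriesE -big_split /= mulr_sumr.
by apply: cvgM; [exact: cvg_cst|apply: cvgD; exact: is_cvg_series_exp_coeff].
Qed.

Lemma norm_exp_coeff x k : `|exp_coeff x k| = exp_coeff `|x| k.
Proof. by rewrite /exp_coeff /= normrM normfV normrX [`|_%:R|]@ger0_norm. Qed.

Lemma is_cvg_normed_cosh_series x : cvgn [normed series (cosh_coeff x)].
Proof.
apply: (@is_cvg_series_ge0_bounded _ _ (expR `|x|)) => [n|N]; first exact: normr_ge0.
have exp_ge0 n : 0 <= exp_coeff `|x| n by rewrite exp_coeff_ge0.
apply: le_trans (series_le_lim exp_ge0 (is_cvg_series_exp_coeff `|x|) N).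
rewrite !seriesE; apply: ler_sum => k _ /=.
rewrite /cosh_coeff normrM ger0_norm ?invr_ge0 // ler_pdivrMl //.
apply: le_trans (ler_normD _ _) _.
by rewrite !norm_exp_coeff normrN -mulr2n mulr_natl.
Qed.

Lemma cauchy_prod_euler_cosh x n :
  cauchy_prod (euler_coeff x) (cosh_coeff x) n = (n == 0%N)%:R.
Proof.
have termE (k : 'I_n.+1) : euler_coeff x k * cosh_coeff x (n - k) =
    ((if odd (n - k) then 0 else euler R k) *+ 'C(n, k)) * (x ^+ n / n`!%:R).
  have le_kn : (k <= n)%N by rewrite -ltnS.
  rewrite /euler_coeff /cosh_coeff /exp_coeff /= exprNn -signr_odd.
  have -> : x ^+ n = x ^+ k * x ^+ (n - k) by rewrite -exprD subnKC.
  rewrite mulrnAl -mulrnAr -mul_div_fact_binomial //.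
  have [k_neq0 nk_neq0] := (natr_fact_neq0 R k, natr_fact_neq0 R (n - k)).
  by case: (odd (n - k)); rewrite ?expr1 ?expr0; field; rewrite k_neq0 nk_neq0.
rewrite /cauchy_prod (eq_bigr _ (fun k _ => termE k)) -mulr_suml.
case: n {termE} => [|n]; first by rewrite big_ord1 /= expr0 fact0 divr1 mulr1 euler0.
by rewrite euler_cosh_conv // mul0r.
Qed.

Lemma cvg_euler_series x : `|x| < pi / 2 -> series (euler_coeff x) @ \oo --> sech x.
Proof.
move=> ltxpi; have cvg_nE := is_cvg_normed_euler_series ltxpi.
have cvgE : cvgn (series (euler_coeff x)) by apply: normed_cvg.
have cvg_one : series (cauchy_prod (euler_coeff x) (cosh_coeff x)) @ \oo --> (1 : R).
  apply: cvg_near_cst; near=> N; have [M ->] : exists M, N = M.+1.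
    by exists N.-1; rewrite prednK //; near: N; exact: nbhs_infty_gt.
  rewrite seriesE big_ord_recl cauchy_prod_euler_cosh big1 ?addr0 // => i _.
  by rewrite cauchy_prod_euler_cosh.
have cvg_prod := cvg_cauchy_prod cvgE (@cvg_cosh_series x) cvg_nE
  (@is_cvg_normed_cosh_series x).
have limE : limn (series (euler_coeff x)) * (2^-1 * (expR x + expR (- x))) = 1.
  by rewrite -(cvg_lim _ cvg_prod) // (cvg_lim _ cvg_one).
suff -> : sech x = limn (series (euler_coeff x)) by [].
have cosh_neq0 : expR x + expR (- x) != 0 by rewrite gt_eqF // addr_gt0 ?expR_gt0.
apply: (@mulIf _ (2^-1 * (expR x + expR (- x)))).
  by rewrite mulf_neq0 // invr_eq0 pnatr_eq0.
by rewrite limE /sech; field.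
Unshelve. all: by end_near.
Qed.

End SechSeries.

Lemma sa_poly_Kn_exp_coeff (R : realType) (t x : R) n :
  sa_poly_eval (Kn_rel n) finset.setT t * x ^+ n / n`!%:R =
  cauchy_prod (euler_coeff x) (exp_coeff (t * x)) n.
Proof.
rewrite sa_poly_Kn /cauchy_prod !mulr_suml; apply: eq_bigr => k _.
have le_kn : (k <= n)%N by rewrite -ltnS.
rewrite /euler_coeff /exp_coeff /= -mulrA mul_div_fact_binomial // mulrnAl exprMn.
have -> : x ^+ n = x ^+ k * x ^+ (n - k) by rewrite -exprD subnKC.
by congr (_ *+ _); ring.
Qed.

Lemma series_sa_poly_Kn (R : realType) (t x : R) N :
  \sum_(0 <= n < N) sa_poly_eval (Kn_rel n) finset.setT t * x ^+ n / n`!%:R =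
  series (cauchy_prod (euler_coeff x) (exp_coeff (t * x))) N.
Proof. by rewrite seriesEnat /=; apply: eq_bigr => n _; rewrite sa_poly_Kn_exp_coeff. Qed.

Theorem mainTheorem3 (R : realType) (t x : R) (hx : `|x| < pi / 2) :
  (fun N : nat => \sum_(0 <= n < N)
      sa_poly_eval (Kn_rel n) (finset.setT : {set 'I_n}) t * x ^+ n / n`!%:R)
    @ \oo --> expR (t * x) * sech x.
Proof.
rewrite (eq_cvg _ _ (series_sa_poly_Kn t x)) [expR (t * x) * _]mulrC.
apply: cvg_cauchy_prod (cvg_euler_series hx) _ (is_cvg_normed_euler_series hx) _.
- exact: is_cvg_series_exp_coeff.
- by rewrite normed_series_exp_coeff; apply: is_cvg_series_exp_coeff.
Qed.
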